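(* Let $R_1,\dots,R_{10}\subset[0,1]^2$ be rectangles with arbitrary side lengths and let $g_i$ be supported on $R_i$. Then for $1\le p\le\infty$, every integer $s\ge2$, every $N\ge1$ and every ball $B_N\subset\mathbb{R}^5$ of radius $N$, $$\Big\|\Big(\prod_{i=1}^{10}|E_{R_i}g_i|\Big)^{1/10}\Big\|_{L^p(w_{B_N})}\le N^{2^{-s}}\Big\|\Big(\prod_{i=1}^{10}\sum_{l(\tau_s)=N^{-2^{-s}}}|E_{\tau_s}g_i|^2\Big)^{1/20}\Big\|_{L^p(w_{B_N})},$$ where $\tau_s$ ranges over a partition of $[0,1]^2$ into squares of side length $N^{-2^{-s}}$.
   Context: $e(z)=e^{2\pi iz}$; for $S\subset[0,1]^2$, $E_Sg(x)=\int_Sg(s,t)e(x_1s+x_2t+x_3s^2+x_4t^2+x_5st)\,ds\,dt$; for a ball $B$ of center $c(B)$ and radius $r$, $w_B(x)=(1+|x-c(B)|/r)^{-100}$ and $\|f\|_{L^p(w_B)}=(\int|f|^pw_B)^{1/p}$ (with the usual weighted sup-norm convention for $p=\infty$). *)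

From HB Require Import structures.
From mathcomp Require Import all_boot all_order all_algebra.
From mathcomp Require Import all_classical all_reals all_analysis ess_sup_inf.
From mathcomp.real_closed Require Import complex.

Set Implicit Arguments.
Unset Strict Implicit.
Unset Printing Implicit Defensive.

Import Order.TTheory GRing.Theory Num.Theory.
Import numFieldNormedType.Exports.

Local Open Scope classical_set_scope.
Local Open Scope ring_scope.

Section Defs.
Variable R : realType.

Definition R2 := (R * R)%type.
Definition R5 := ((((R * R) * R) * R) * R)%type.

Definition leb2 := (@lebesgue_measure R \x @lebesgue_measure R)%E.
Definition leb5 :=
  ((((@lebesgue_measure R \x @lebesgue_measure R) \x @lebesgue_measure R)
      \x @lebesgue_measure R) \x @lebesgue_measure R)%E.

Definition x1 (x : R5) : R := x.1.1.1.1.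
Definition x2 (x : R5) : R := x.1.1.1.2.
Definition x3 (x : R5) : R := x.1.1.2.
Definition x4 (x : R5) : R := x.1.2.
Definition x5 (x : R5) : R := x.2.

Definition dist5 (x y : R5) : R :=
  Num.sqrt ((x1 x - x1 y) ^+ 2 + (x2 x - x2 y) ^+ 2 + (x3 x - x3 y) ^+ 2
            + (x4 x - x4 y) ^+ 2 + (x5 x - x5 y) ^+ 2).

Definition cabs (z : R[i]) : R :=
  Num.sqrt (complex.Re z ^+ 2 + complex.Im z ^+ 2).

Definition expe (z : R) : R[i] := Complex (cos (2 * pi * z)) (sin (2 * pi * z)).

Definition cintegral2 (S : set R2) (f : R2 -> R[i]) : R[i] :=
  Complex (Rintegral leb2 S (fun z => complex.Re (f z)))
          (Rintegral leb2 S (fun z => complex.Im (f z))).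

Definition phase (x : R5) (st : R2) : R :=
  x1 x * st.1 + x2 x * st.2 + x3 x * st.1 ^+ 2 + x4 x * st.2 ^+ 2
  + x5 x * st.1 * st.2.

Definition Eop (S : set R2) (g : R2 -> R[i]) (x : R5) : R[i] :=
  cintegral2 S (fun st => g st * expe (phase x st)).

Definition wB (c : R5) (r : R) (x : R5) : R :=
  ((1 + dist5 x c / r) ^+ 100)^-1.

(* ||F||_{L^p(w_B)} for 1 <= p <= oo;
   p = +oo: essential supremum of |F| w_B (weighted sup-norm convention) *)
Definition wLnorm (p : \bar R) (c : R5) (r : R) (F : R5 -> R) : \bar R :=
  match p with
  | q%:E => ((\int[leb5]_x ((`|F x| `^ q * wB c r x)%:E)) `^ q^-1)%E
  | +oo%E => ess_sup leb5 (fun x => (`|F x| * wB c r x)%:E)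
  | -oo%E => 0%E
  end.

Definition unit_square : set R2 := `[0, 1] `*` `[0, 1].

Definition is_rect_in_unit_square (S : set R2) : Prop :=
  exists a1 b1 a2 b2 : R,
    [/\ 0 <= a1 <= b1, b1 <= 1, 0 <= a2 <= b2, b2 <= 1 &
        S = `[a1, b1] `*` `[a2, b2]].

Definition square (d : R) (c : R2) : set R2 :=
  `[c.1, c.1 + d] `*` `[c.2, c.2 + d].
Definition open_square (d : R) (c : R2) : set R2 :=
  `]c.1, c.1 + d[ `*` `]c.2, c.2 + d[.

(* the list of corners cs describes a partition of [0,1]^2 into squares
   of side length d (squares contained in [0,1]^2, covering it, with
   pairwise disjoint interiors, i.e. overlapping only on boundaries) *)
Definition square_partition (d : R) (cs : seq R2) : Prop :=
  [/\ (forall c, c \in cs -> square d c `<=` unit_square),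
      unit_square `<=` \bigcup_(c in [set c | c \in cs]) square d c &
      (forall i j : nat, (i < size cs)%N -> (j < size cs)%N -> i <> j ->
         open_square d (nth (0, 0) cs i) `&` open_square d (nth (0, 0) cs j)
         = set0)].

End Defs.

From Pilot Require Import Defs.
From HB Require Import structures.
From mathcomp Require Import all_boot all_order all_algebra.
From mathcomp Require Import all_classical all_reals all_analysis ess_sup_inf.
From mathcomp.real_closed Require Import complex.
From mathcomp Require Import measurable_realfun ring lra.

(* Each rectangle R_i lies in [0,1]^2 and the closed squares tau of the partition
   overlap only on Lebesgue-null grid lines, so E_{R_i} g_i = sum_tau E_tau g_i.
   Comparing areas, there are N^(2 2^-s) squares, and Cauchy-Schwarz over them gives
   |E_{R_i} g_i| <= N^(2^-s) (sum_tau |E_tau g_i|^2)^(1/2) pointwise.  Taking the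
   geometric mean over i, the theorem follows because the weighted L^p norm (and the
   weighted essential supremum) is monotone and positively homogeneous.  The argument
   works for every s. *)

Set Implicit Arguments.
Unset Strict Implicit.
Unset Printing Implicit Defensive.

Import Order.TTheory GRing.Theory Num.Theory.
Import numFieldNormedType.Exports.

Local Open Scope classical_set_scope.
Local Open Scope ring_scope.

(* The integrands of [wLnorm] need not be measurable; this is harmless because the
   integral of a nonnegative function is the supremum of the integrals of the
   nonnegative simple functions below it. *)
Section ge0_integral_nonmeasurable.
Context d (T : measurableType d) (R : realType) (mu : {measure set T -> \bar R}).
Local Open Scope ereal_scope.
Import HBNNSimple.

Lemma ge0_le_integralT (f g : T -> \bar R) :
  (forall x, 0 <= f x) -> (forall x, f x <= g x) ->
  \int[mu]_x f x <= \int[mu]_x g x.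
Proof.
move=> f0 fg; have g0 x : 0 <= g x by exact: le_trans (f0 x) (fg x).
rewrite !ge0_integralTE //; apply: ge_ereal_sup => _ [h /= hf <-].
by apply: ereal_sup_ubound; exists h => // x; exact: le_trans (hf x) (fg x).
Qed.

Lemma ge0_integralZlT_le (f : T -> \bar R) (k : R) : (0 < k)%R ->
  (forall x, 0 <= f x) -> \int[mu]_x (k%:E * f x) <= k%:E * \int[mu]_x f x.
Proof.
move=> k0 f0; have kf0 x : 0 <= k%:E * f x by rewrite mule_ge0 // lee_fin ltW.
rewrite !ge0_integralTE //; apply: ge_ereal_sup => _ [h /= hf <-].
have k'0 : (0 <= k^-1)%R by rewrite invr_ge0 ltW.
pose h' := scale_nnsfun h k'0.
have -> : sintegral mu h = k%:E * sintegral mu h'.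
  by rewrite /h' /= sintegralrM muleA -EFinM mulfV ?gt_eqF // mul1e.
apply: lee_wpmul2l; first by rewrite lee_fin ltW.
apply: ereal_sup_ubound; exists h' => // x /=.
have -> : f x = (k^-1)%:E * (k%:E * f x).
  by rewrite muleA -EFinM mulVf ?lt0r_neq0 // mul1e.
by rewrite EFinM; apply: lee_wpmul2l; [rewrite lee_fin | exact: hf].
Qed.

End ge0_integral_nonmeasurable.

Lemma integrable_indic_lty d (T : measurableType d) (R : realType)
    (mu : {measure set T -> \bar R}) (A : set T) :
  measurable A -> (mu A < +oo)%E -> mu.-integrable setT (EFin \o \1_A).
Proof.
move=> mA Alty; apply/integrableP; split; first exact/measurable_EFinP.
rewrite (eq_integral (fun x => (\1_A x)%:E)); last first.
  by move=> t _; rewrite gee0_abs // lee_fin.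
by rewrite integral_indic // setIT.
Qed.

Lemma lebesgue_measureT (R : realType) : (@lebesgue_measure R setT = +oo)%E.
Proof. by rewrite -set_itvNyy lebesgue_measure_itv. Qed.

Section product_measure_setX.
Context (R : realType) d1 d2 (T1 : measurableType d1) (T2 : measurableType d2).
Variables (m1 : {measure set T1 -> \bar R})
  (m2 : {sigma_finite_measure set T2 -> \bar R}).

Lemma product_measureTy :
  m1 setT = +oo%E -> m2 setT = +oo%E -> ((m1 \x m2)%E setT = +oo)%E.
Proof. by move=> m1T m2T; rewrite -setXTT product_measure1E // m1T m2T mulyy. Qed.

Lemma product_measureX0l A B : measurable A -> measurable B ->
  m1 A = 0%E -> ((m1 \x m2) (A `*` B) = 0)%E.
Proof. by move=> mA mB A0; rewrite product_measure1E // A0 mul0e. Qed.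

Lemma product_measureX0r A B : measurable A -> measurable B ->
  m2 B = 0%E -> ((m1 \x m2) (A `*` B) = 0)%E.
Proof. by move=> mA mB B0; rewrite product_measure1E // B0 mule0. Qed.

End product_measure_setX.

Section weighted_norm.
Variable R : realType.

Lemma leb5T_gt0 : (0 < @leb5 R setT)%E.
Proof.
suff -> : @leb5 R setT = +oo%E by [].
by do 4 (apply: product_measureTy; last exact: lebesgue_measureT);
  exact: lebesgue_measureT.
Qed.

Lemma wB_ge0 (c : R5 R) (r : R) x : 0 < r -> 0 <= wB c r x.
Proof.
by move=> r0; rewrite invr_ge0 exprn_ge0 // addr_ge0 // divr_ge0 ?sqrtr_ge0 ?(ltW r0).
Qed.

Lemma wLnorm_le_scale (p : \bar R) (c : R5 R) (r k : R) (F G : R5 R -> R) :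
  (1 <= p)%E -> 0 < r -> 0 < k -> (forall x, `|F x| <= k * `|G x|) ->
  (wLnorm p c r F <= k%:E * wLnorm p c r G)%E.
Proof.
move=> p1 r0 k0 FG; case: p p1 => [q||] //; rewrite ?lee_fin => q1 /=; last first.
  rewrite -ess_supZl ?leb5T_gt0 ?(ltW k0) //.
  apply: le_ess_sup; apply: nearW => x /=.
  by rewrite -EFinM lee_fin mulrA ler_wpM2r ?wB_ge0.
have q0 : 0 <= q by rewrite (le_trans ler01).
set I := fun H : R5 R -> R => (\int[@leb5 R]_x ((`|H x| `^ q * wB c r x)%:E))%E.
have I0 H : (0 <= I H)%E.
  by apply: integral_ge0 => x _; rewrite lee_fin mulr_ge0 ?powR_ge0 ?wB_ge0.
have IFG : (I F <= (k `^ q)%:E * I G)%E.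
  apply: le_trans; last apply: ge0_integralZlT_le; last 2 first.
  - by rewrite powR_gt0.
  - by move=> x; rewrite lee_fin mulr_ge0 ?powR_ge0 ?wB_ge0.
  apply: ge0_le_integralT => x; first by rewrite lee_fin mulr_ge0 ?powR_ge0 ?wB_ge0.
  rewrite -EFinM lee_fin mulrA ler_wpM2r ?wB_ge0 // -powRM ?(ltW k0) //.
  by apply: (ge0_ler_powR q0); rewrite ?nnegrE ?mulr_ge0 ?(ltW k0).
apply: le_trans (gt0_ler_poweR _ _ _ IFG) _.
- by rewrite invr_ge0.
- by rewrite in_itv /= leey I0.
- by rewrite in_itv /= leey mule_ge0 // lee_fin powR_ge0.
rewrite poweRM ?lee_fin ?powR_ge0 // poweR_EFin -powRrM.
by rewrite mulfV ?gt_eqF ?(lt_le_trans ltr01) // powRr1 // ltW.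
Qed.

End weighted_norm.

Section square_partition.
Variable R : realType.
Local Notation T := (R2 R).
Local Notation mu := (@leb2 R).
Implicit Types (d : R) (t z : T) (cs : seq T).

Lemma lebesgue_measure_itv_cc (a b : R) : a <= b ->
  @lebesgue_measure R `[a, b] = (b - a)%:E.
Proof.
rewrite lebesgue_measure_itv /= lte_fin le_eqVlt => /predU1P[->|->//].
by rewrite ltxx subrr.
Qed.

Lemma leb2_rectangle (a b a' b' : R) : a <= b -> a' <= b' ->
  mu (`[a, b] `*` `[a', b']) = ((b - a) * (b' - a'))%:E.
Proof.
move=> ab ab'; rewrite /leb2 product_measure1E // EFinM.
by congr (_ * _)%E; (etransitivity; [exact: lebesgue_measure_itv_cc|]).
Qed.

Lemma leb2_square d t : 0 <= d -> mu (square d t) = (d ^+ 2)%:E.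
Proof.
move=> d0; have addKd u : u + d - u = d by rewrite addrC addKr.
by rewrite /square leb2_rectangle ?lerDl // !addKd expr2.
Qed.

Lemma leb2_unit_square : mu (@unit_square R) = 1%E.
Proof. by rewrite /unit_square leb2_rectangle // subr0 mulr1. Qed.

Definition square_boundary d t : set T :=
  [set t.1] `*` setT `|` [set t.1 + d] `*` setT `|`
  setT `*` [set t.2] `|` setT `*` [set t.2 + d].

Lemma square_boundary_negligible d t : mu.-negligible (square_boundary d t).
Proof.
have vline a : mu.-negligible ([set a] `*` setT).
  apply/negligibleP; first exact: measurableX.
  by apply: product_measureX0l => //; exact: lebesgue_measure_set1.
have hline a : mu.-negligible (setT `*` [set a]).
  apply/negligibleP; first exact: measurableX.
  by apply: product_measureX0r => //; exact: lebesgue_measure_set1.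
by repeat apply: negligibleU; solve [exact: vline | exact: hline].
Qed.

Lemma ae_not_square_boundary d cs :
  \forall z \ae mu, forall t, t \in cs -> ~ square_boundary d t z.
Proof.
have ae_filter := ae_filter_ringOfSetsType mu.
elim: cs => [|t cs IH]; first by apply: nearW => z t; rewrite in_nil.
have nb_t : \forall z \ae mu, ~ square_boundary d t z.
  by apply: negligibleS (square_boundary_negligible d t) => z /= /contrapT.
apply: filterS2 nb_t IH => z nbt nbcs u; rewrite in_cons => /predU1P[->|/nbcs] //.
Qed.

Lemma square_partition_uniq d cs : 0 < d -> square_partition d cs -> uniq cs.
Proof.
move=> d0 [_ _ disj]; apply/negPn/negP => /(uniqPn (0, 0)) [i [j [ij jcs eq_ij]]].
have i_neq_j : i <> j by move=> /eqP; rewrite ltn_eqF.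
have := disj i j (ltn_trans ij jcs) jcs i_neq_j; rewrite eq_ij setIid => /eqP.
apply/negP/set0P; set t := nth (0, 0) cs j.
have half_d : (0 < d / 2) && (d / 2 < d) by apply/andP; split; lra.
exists (t.1 + d / 2, t.2 + d / 2).
by rewrite /open_square /= !in_itv /= !ltrDl !ltrD2l half_d.
Qed.

Lemma open_square_not_boundary d t z :
  square d t z -> ~ square_boundary d t z -> open_square d t z.
Proof.
rewrite /square /open_square /= !in_itv /= => -[/andP[t1z z1t] /andP[t2z z2t]] nbz.
have z1_neq : z.1 != t.1 by apply/eqP => e; apply: nbz; left; left; left.
have z1_neq' : z.1 != t.1 + d by apply/eqP => e; apply: nbz; left; left; right.
have z2_neq : z.2 != t.2 by apply/eqP => e; apply: nbz; left; right.
have z2_neq' : z.2 != t.2 + d by apply/eqP => e; apply: nbz; right.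
by split; apply/andP; split; rewrite lt_neqAle ?t1z ?z1t ?t2z ?z2t ?andbT // eq_sym.
Qed.

Lemma sum_restrict_square_partition d cs (f : T -> \bar R) z :
  0 < d -> square_partition d cs -> (forall z, ~ unit_square z -> f z = 0%E) ->
  (forall t, t \in cs -> ~ square_boundary d t z) ->
  (\sum_(t <- cs) (f \_ (square d t)) z)%E = f z.
Proof.
move=> d0 part f0 nbz; have cs_uniq : uniq cs by apply: square_partition_uniq part.
case: part => sq_sub cover disj.
have [Uz|NUz] := pselect (unit_square z); last first.
  rewrite f0 // big1_seq // => t tcs; rewrite /patch; case: ifPn => //.
  by rewrite inE => /(sq_sub _ tcs).
have [t0 /= t0cs t0z] := cover _ Uz.
rewrite (bigD1_seq t0) //= /patch ifT ?inE // big_seq_cond big1 ?adde0 //.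
move=> t /andP[tcs t_neq]; case: ifPn => //; rewrite inE => tz.
have index_neq : index t cs <> index t0 cs.
  by move=> /(congr1 (nth (0, 0) cs)); rewrite !nth_index //; exact/eqP.
have := disj _ _ _ _ index_neq; rewrite ?index_mem // !nth_index // => disj_t.
have : (open_square d t `&` open_square d t0) z.
  by split; apply: open_square_not_boundary => //; exact: nbz.
by rewrite disj_t.
Qed.

Lemma measurable_square d t : measurable (square d t).
Proof. exact: measurableX. Qed.

Lemma Rintegral_square_partition d cs (f : T -> R) :
  0 < d -> square_partition d cs -> mu.-integrable setT (EFin \o f) ->
  (forall z, ~ unit_square z -> f z = 0) ->
  Rintegral mu setT f = \sum_(t <- cs) Rintegral mu (square d t) f.
Proof.
move=> d0 part fi f0.
have sq_int t : mu.-integrable (square d t) (EFin \o f).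
  by apply: integrableS fi => //; exact: measurable_square.
have patch_int t : mu.-integrable setT ((EFin \o f) \_ (square d t)).
  exact/(@integrable_mkcond _ _ _ mu _ _ (measurable_square d t)).
rewrite sum_fine; last first.
  by move=> t _; apply: integrable_fin_num (sq_int t); exact: measurable_square.
congr fine; under eq_bigr do rewrite integral_mkcond.
rewrite -integral_sum //; apply: ae_eq_integral => //.
- exact: measurable_int fi.
- by apply: (measurable_int mu); apply: integrable_sum => // t _; exact: patch_int.
have ae_filter := ae_filter_ringOfSetsType mu.
apply: filterS (ae_not_square_boundary d cs) => z nbz _.
by rewrite sum_restrict_square_partition // => u /f0 /= ->.
Qed.

Lemma square_partition_size d cs : 0 < d -> square_partition d cs ->
  (size cs)%:R * d ^+ 2 = 1.
Proof.
move=> d0 part; have mU : measurable (@unit_square R) by exact: measurableX.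
have U_int : mu.-integrable setT (EFin \o \1_(@unit_square R)).
  have := integrable_indic_lty (mu := mu) mU; apply.
  by rewrite [X in (X < _)%E](_ : _ = 1%E) ?ltry //; exact: leb2_unit_square.
have sq_U t : t \in cs ->
    (\int[mu]_(x in square d t) (\1_(@unit_square R) x)%:E)%E = (d ^+ 2)%:E.
  move=> tcs; have msq := measurable_square d t.
  have sq_sub : square d t `<=` @unit_square R by case: part => + _ _; exact.
  by rewrite integral_indic // setIidr //; apply: leb2_square; exact: ltW.
have U0 z : ~ unit_square z -> \1_(@unit_square R) z = 0 :> R.
  by move=> Uz; rewrite indicE memNset.
have := Rintegral_square_partition d0 part U_int U0.
rewrite /Rintegral integral_indic // setIT [X in fine X](_ : _ = 1%E); last first.
  exact: leb2_unit_square.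
move=> /= U_sum; rewrite [RHS]U_sum big_seq (eq_bigr (fun=> d ^+ 2)) => [|t /sq_U -> //].
by rewrite -big_seq big_const_seq count_predT iter_addr addr0 mulr_natl.
Qed.

End square_partition.

Lemma Rintegral_setT_supp d (T : measurableType d) (R : realType)
    (mu : {measure set T -> \bar R}) (S : set T) (f : T -> R) :
  (forall z, ~ S z -> f z = 0) -> Rintegral mu S f = Rintegral mu setT f.
Proof.
move=> f0; rewrite Rintegral_mkcond; congr Rintegral; apply/funext => z.
by rewrite /patch; case: ifPn => // /negP zS; rewrite f0 // => Sz; apply/zS/mem_set.
Qed.

Section complex_modulation.
Context d (T : measurableType d) (R : realType) (mu : {measure set T -> \bar R}).

Lemma integrable_Re_Im_mul (g h : T -> R[i]) :
  mu.-integrable setT (EFin \o (fun z => complex.Re (g z))) ->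
  mu.-integrable setT (EFin \o (fun z => complex.Im (g z))) ->
  measurable_fun setT (fun z => complex.Re (h z)) ->
  measurable_fun setT (fun z => complex.Im (h z)) ->
  [bounded complex.Re (h z) | z in setT] -> [bounded complex.Im (h z) | z in setT] ->
  mu.-integrable setT (EFin \o (fun z => complex.Re (g z * h z))) /\
  mu.-integrable setT (EFin \o (fun z => complex.Im (g z * h z))).
Proof.
move=> gRe gIm mRe mIm bRe bIm.
pose re (u : T -> R[i]) := EFin \o (fun z => complex.Re (u z)).
pose im (u : T -> R[i]) := EFin \o (fun z => complex.Im (u z)).
split.
- have -> : EFin \o (fun z => complex.Re (g z * h z)) = (re g \* re h \- im g \* im h)%E.
    by apply/funext => z; rewrite /re /im /=; case: (g z) => ? ?; case: (h z) => ? ? /=;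
      rewrite EFinB !EFinM.
  by apply: integrableB => //; exact: integrableMl.
- have -> : EFin \o (fun z => complex.Im (g z * h z)) = (re g \* im h \+ im g \* re h)%E.
    by apply/funext => z; rewrite /re /im /=; case: (g z) => ? ?; case: (h z) => ? ? /=;
      rewrite EFinD !EFinM.
  by apply: integrableD => //; exact: integrableMl.
Qed.

End complex_modulation.

Section extension_operator.
Variable R : realType.
Local Notation T := (R2 R).
Local Notation mu := (@leb2 R).

Lemma measurable_phase (x : R5 R) :
  measurable_fun setT (fun st : T => 2 * pi * phase x st).
Proof.
by repeat first [ apply: measurable_funD
                | apply: measurable_funM
                | apply: measurable_funX
                | exact: measurable_cst | exact: measurable_fst | exact: measurable_snd ].
Qed.

Lemma integrable_Re_Im_mul_expe (g : T -> R[i]) (x : R5 R) :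
  mu.-integrable setT (fun z => (complex.Re (g z))%:E) ->
  mu.-integrable setT (fun z => (complex.Im (g z))%:E) ->
  mu.-integrable setT (EFin \o (fun z => complex.Re (g z * Defs.expe (phase x z)))) /\
  mu.-integrable setT (EFin \o (fun z => complex.Im (g z * Defs.expe (phase x z)))).
Proof.
move=> gRe gIm; apply: integrable_Re_Im_mul => //=.
- exact: measurableT_comp (continuous_measurable_fun (@continuous_cos R))
    (measurable_phase x).
- exact: measurableT_comp (continuous_measurable_fun (@continuous_sin R))
    (measurable_phase x).
- by rewrite /bounded_near; near=> M; move=> z _ /=; rewrite (le_trans (cos_max _)).
- by rewrite /bounded_near; near=> M; move=> z _ /=; rewrite (le_trans (sin_max _)).
Unshelve. all: by end_near.
Qed.

Lemma sum_Complex (I : Type) (s : seq I) (a b : I -> R) :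
  \sum_(i <- s) Complex (a i) (b i) = Complex (\sum_(i <- s) a i) (\sum_(i <- s) b i).
Proof. by elim: s => [|i s IH]; rewrite ?big_nil // !big_cons IH. Qed.

Lemma Eop_square_partition (S : set T) (g : T -> R[i]) (d : R) (cs : seq T) (x : R5 R) :
  0 < d -> square_partition d cs -> S `<=` @unit_square R ->
  mu.-integrable setT (fun z => (complex.Re (g z))%:E) ->
  mu.-integrable setT (fun z => (complex.Im (g z))%:E) ->
  (forall z, ~ S z -> g z = 0) ->
  Eop S g x = \sum_(t <- cs) Eop (square d t) g x.
Proof.
move=> d0 part SU gRe gIm g0; rewrite /Eop /cintegral2 sum_Complex.
have [iRe iIm] := integrable_Re_Im_mul_expe x gRe gIm.
have vanish (f : R[i] -> R) : f 0 = 0 -> forall z, ~ @unit_square R z ->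
    f (g z * Defs.expe (phase x z)) = 0.
  by move=> f0 z Uz; rewrite g0 ?mul0r // => /SU.
congr Complex; rewrite Rintegral_setT_supp => [|z /g0 ->]; rewrite ?mul0r //.
- exact: Rintegral_square_partition d0 part iRe (vanish _ erefl).
- exact: Rintegral_square_partition d0 part iIm (vanish _ erefl).
Qed.

End extension_operator.

Lemma sqr_sum_le_size (R : realFieldType) (I : Type) (s : seq I) (a : I -> R) :
  (\sum_(i <- s) a i) ^+ 2 <= (size s)%:R * \sum_(i <- s) a i ^+ 2.
Proof.
case: s => [|i0 s]; first by rewrite !big_nil expr0n mul0r.
set S := \sum_(i <- _) a i; set n : R := (size _)%:R.
have n_gt0 : 0 < n by rewrite ltr0n.
have sum_const (c : R) : \sum_(i <- i0 :: s) c = n * c.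
  by rewrite big_const_seq count_predT iter_addr addr0 mulr_natl.
have dev : \sum_(i <- i0 :: s) (n * a i - S) ^+ 2
           = n * (n * \sum_(i <- i0 :: s) a i ^+ 2 - S ^+ 2).
  rewrite (eq_bigr (fun i => n ^+ 2 * a i ^+ 2 - 2 * n * S * a i + S ^+ 2)); last first.
    by move=> i _; ring.
  rewrite !big_split /= sumrN sum_const -!mulr_sumr -/S; ring.
have : 0 <= n * (n * \sum_(i <- i0 :: s) a i ^+ 2 - S ^+ 2).
  by rewrite -dev sumr_ge0 // => i _; exact: sqr_ge0.
by rewrite pmulr_rge0 // subr_ge0.
Qed.

Lemma cabsE (R : realType) (z : R[i]) : `|z| = (cabs z)%:C%C.
Proof. by rewrite normc_def. Qed.

Lemma cabs_ge0 (R : realType) (z : R[i]) : 0 <= cabs z.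
Proof. exact: sqrtr_ge0. Qed.

Lemma cabs_sum_le (R : realType) (I : Type) (s : seq I) (z : I -> R[i]) :
  cabs (\sum_(i <- s) z i) <= \sum_(i <- s) cabs (z i).
Proof.
have := ler_norm_sum s z xpredT; rewrite cabsE.
have -> : \sum_(i <- s) `|z i| = (\sum_(i <- s) cabs (z i))%:C%C.
  by rewrite (rmorph_sum (@real_complex R)); apply: eq_bigr => i _; rewrite cabsE.
by rewrite lecE /= => /andP[].
Qed.

Lemma rect_in_unit_square_sub (R : realType) (S : set (R2 R)) :
  is_rect_in_unit_square S -> S `<=` @unit_square R.
Proof.
move=> [a1 [b1 [a2 [b2 [/andP[a1_ge0 ab1] b1_le1 /andP[a2_ge0 ab2] b2_le1 ->]]]]] z.
rewrite /unit_square /= !in_itv /= => -[/andP[? ?] /andP[? ?]].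
by split; apply/andP; split; lra.
Qed.

Lemma cabs_Eop_rect_le (R : realType) (S : set (R2 R)) (g : R2 R -> R[i]) (d : R)
    (cs : seq (R2 R)) (x : R5 R) :
  0 < d -> square_partition d cs -> is_rect_in_unit_square S ->
  (@leb2 R).-integrable setT (fun z => (complex.Re (g z))%:E) ->
  (@leb2 R).-integrable setT (fun z => (complex.Im (g z))%:E) ->
  (forall z, ~ S z -> g z = 0) ->
  cabs (Eop S g x) ^+ 2 <= (size cs)%:R * \sum_(t <- cs) cabs (Eop (square d t) g x) ^+ 2.
Proof.
move=> d0 part /rect_in_unit_square_sub SU gRe gIm g0.
rewrite (Eop_square_partition x d0 part SU gRe gIm g0).
apply: le_trans (sqr_sum_le_size _ _); rewrite ler_sqr ?nnegrE ?cabs_ge0 ?sumr_ge0 //.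
  exact: cabs_sum_le.
by move=> t _; exact: cabs_ge0.
Qed.

Lemma prodr_powR (R : realType) (I : Type) (s : seq I) (F : I -> R) (r : R) :
  (forall i, 0 <= F i) -> \prod_(i <- s) F i `^ r = (\prod_(i <- s) F i) `^ r.
Proof.
move=> F_ge0; elim: s => [|i s IH]; first by rewrite !big_nil powR1.
by rewrite !big_cons IH powRM // prodr_ge0.
Qed.

Lemma geomean_le_scale (R : realType) (n : nat) (a b : 'I_n -> R) (k : R) :
  (0 < n)%N -> 0 < k -> (forall i, 0 <= a i <= k * b i) ->
  (\prod_(i < n) a i) `^ n%:R^-1 <= k * (\prod_(i < n) b i) `^ n%:R^-1.
Proof.
move=> n_gt0 k_gt0 ab.
have a_ge0 i : 0 <= a i by case/andP: (ab i).
have b_ge0 i : 0 <= b i.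
  by rewrite -(pmulr_rge0 _ k_gt0); case/andP: (ab i) => /le_trans; apply.
apply: (@le_trans _ _ ((\prod_(i < n) (k * b i)) `^ n%:R^-1)).
  apply: ge0_ler_powR; rewrite ?invr_ge0 ?nnegrE ?prodr_ge0 //.
    by move=> i _; rewrite mulr_ge0 ?(ltW k_gt0).
  by apply: ler_prod => i _; exact: ab.
rewrite big_split /= prodr_const card_ord powRM ?exprn_ge0 ?prodr_ge0 ?(ltW k_gt0) //.
rewrite -powR_mulrn ?(ltW k_gt0) // -powRrM mulfV ?powRr1 ?(ltW k_gt0) //.
by rewrite pnatr_eq0 -lt0n.
Qed.

Theorem lemma8p2 (R : realType)
    (Rect : 'I_10 -> set (R2 R)) (g : 'I_10 -> R2 R -> R[i])
    (p : \bar R) (s : nat) (N : R) (c : R5 R) (cs : seq (R2 R)) :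
  (forall i, is_rect_in_unit_square (Rect i)) ->
  (forall i, (@leb2 R).-integrable setT (fun z => (complex.Re (g i z))%:E)) ->
  (forall i, (@leb2 R).-integrable setT (fun z => (complex.Im (g i z))%:E)) ->
  (forall i z, ~ Rect i z -> g i z = 0) ->
  (1 <= p)%E -> (2 <= s)%N -> 1 <= N ->
  square_partition (N `^ (- ((2 ^+ s)^-1))) cs ->
  (wLnorm p c N
     (fun x => ((\prod_(i < 10) cabs (Eop (Rect i) (g i) x)) `^ (10^-1))%R)
   <= (N `^ ((2 ^+ s)^-1))%R%:E *
      wLnorm p c N
        (fun x => ((\prod_(i < 10)
                     \sum_(tau <- cs)
                        cabs (Eop (square (N `^ (- ((2 ^+ s)^-1))) tau) (g i) x)
                          ^+ 2) `^ (20^-1))%R))%E.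
Proof.
move=> rect gRe gIm g0 p_ge1 _ N_ge1 part.
set e := (2 ^+ s)^-1 in part *; set d := N `^ (- e) in part *; set k := N `^ e.
have N_gt0 : 0 < N by exact: lt_le_trans ltr01 N_ge1.
have k_gt0 : 0 < k by rewrite powR_gt0.
have d_gt0 : 0 < d by rewrite powR_gt0.
have size_cs : (size cs)%:R = k ^+ 2.
  have := square_partition_size d_gt0 part.
  rewrite /d powRN exprVn => /(congr1 ( *%R^~ (k ^+ 2))).
  by rewrite mul1r -mulrA mulVf ?mulr1 // expf_neq0 // lt0r_neq0.
apply: wLnorm_le_scale => // x.
set S := fun i => \sum_(t <- cs) cabs (Eop (square d t) (g i) x) ^+ 2.
have S_ge0 i : 0 <= S i by rewrite sumr_ge0 // => t _; exact: sqr_ge0.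
rewrite !ger0_norm ?powR_ge0 //.
have -> : (\prod_i S i) `^ 20^-1 = (\prod_(i < 10) S i `^ 2^-1) `^ 10^-1.
  by rewrite prodr_powR // -powRrM -invfM -natrM.
apply: geomean_le_scale => // i; rewrite cabs_ge0 /=.
rewrite -(@ler_pXn2r _ 2) ?nnegrE ?mulr_ge0 ?powR_ge0 ?cabs_ge0 ?(ltW k_gt0) //.
rewrite exprMn -size_cs powR12_sqrt // (sqr_sqrtr (S_ge0 i)).
exact: cabs_Eop_rect_le d_gt0 part (rect i) (gRe i) (gIm i) (g0 i).
Qed.
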